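(* Let $\rho$ be a symmetric probability measure on $\mathbb{R}$ with positive variance $\sigma^2$ such that $(0,0)$ belongs to the interior of $D_\Lambda=\{(u,v)\in\mathbb{R}^2:\Lambda(u,v)<+\infty\}$, where $\Lambda(u,v)=\ln\int_{\mathbb{R}}e^{uz+vz^2}\,d\rho(z)$. Then there exist $\gamma>0$ and $\delta_0\in\,]0,\sigma^2[$ such that for every $\delta\in\,]0,\delta_0]$ there is $N\ge 1$ with \[\forall n\ge N\qquad \int_{\Delta^{*}} e^{nx^2/(2y)}\mathbf{1}_{\{0<y\le\delta\}}\,d\widetilde{\nu}_{n,\rho}(x,y)\le e^{-n\gamma}.\]
   Context: $\Delta=\{(x,y)\in\mathbb{R}^2: x^2\le y\}$ and $\Delta^{*}=\Delta\setminus\{(0,0)\}$. For $n\ge1$, $\widetilde{\nu}_{n,\rho}$ denotes the law of $\left(\frac1n\sum_{i=1}^n X_i,\frac1n\sum_{i=1}^n X_i^2\right)$ where $X_1,\dots,X_n$ are i.i.d. with law $\rho$. *)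

From HB Require Import structures.
From mathcomp Require Import all_boot all_order all_algebra.
From mathcomp Require Import all_classical all_reals all_analysis.
Set Implicit Arguments. Unset Strict Implicit. Unset Printing Implicit Defensive.
Import Order.TTheory GRing.Theory Num.Theory.
Import numFieldNormedType.Exports.
Local Open Scope classical_set_scope.
Local Open Scope ring_scope.

Definition Delta (R : realType) : set (R * R)%type := [set p | p.1 ^+ 2 <= p.2].
Definition Deltastar (R : realType) : set (R * R)%type := @Delta R `\` [set (0, 0)].

(* Lambda(u,v) = ln \int e^{uz+vz^2} drho(z); Lambda(u,v) < +oo iff the
   integral is finite *)
Definition Lambda_finite (R : realType) (rho : probability R R) (u v : R) :=
  (\int[rho]_z (expR (u * z + v * z ^+ 2))%:E < +oo)%E.

Definition symmetric_prob (R : realType) (rho : probability R R) :=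
  forall A : set R, measurable A -> rho ((fun z => - z) @^-1` A) = rho A.

Definition iid_law d (T : measurableType d) (R : realType)
  (P : probability T R) (n : nat) (X : 'I_n -> T -> R) (rho : probability R R) :=
  [/\ forall i, measurable_fun setT (X i),
      forall i (B : set R), measurable B -> P (X i @^-1` B) = rho B &
      forall B : 'I_n -> set R, (forall i, measurable (B i)) ->
        P (\bigcap_i (X i @^-1` B i)) = \big[*%E/1%E]_(i < n) P (X i @^-1` B i)].

Definition empirical_pair (R : realType) (n : nat) (x : 'I_n -> R) : R * R :=
  ((\sum_(i < n) x i) / n%:R, (\sum_(i < n) x i ^+ 2) / n%:R).

(* nu~_{n,rho}: the law of the empirical pair, realized on (T, P) by X *)
Definition nu_tilde d (T : measurableType d) (R : realType)
  (P : probability T R) (n : nat) (X : 'I_n -> T -> R) : set (R * R)%type -> \bar R :=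
  pushforward P (fun w => empirical_pair (fun i => X i w)).

From HB Require Import structures.
From mathcomp Require Import all_boot all_order all_algebra.
From mathcomp Require Import all_classical all_reals all_analysis.
From mathcomp Require Import measurable_realfun.
From mathcomp.algebra_tactics Require Import ring lra.
Import Order.TTheory GRing.Theory Num.Theory.
Import numFieldNormedType.Exports.
Local Open Scope classical_set_scope.
Local Open Scope ring_scope.

Set Implicit Arguments.
Unset Strict Implicit.
Unset Printing Implicit Defensive.

(* Write [S], [Q] for the sums of the [X i] and of their squares.  The integrand
   is [expR (S^2 / (2 Q))] on [{0 < Q <= n delta}], and by Cauchy-Schwarz
   [S^2 <= K Q] with [K] the number of nonzero [X i].  On that event at most
   [n delta / eps^2] of the [X i] satisfy [eps <= |X i|], so for every [L >= 0]
   the integrand is bounded by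
     [expR (n delta L / eps^2) * prod_i expR ((X i != 0)/2 - L (eps <= |X i|))],
   whose expectation is [expR (n delta L / eps^2) * m^n] by independence, with
   [m = rho {0} + e^(1/2) rho {0 < |y| < eps} + e^(1/2 - L) rho {eps <= |y|}].
   Positive variance gives [rho {0} < 1]; taking [eps] small and [L] large makes
   [m <= e^(-2 gamma) < 1], and then [delta <= gamma eps^2 / L] leaves the bound
   [e^(-n gamma)]. *)

Lemma sqr_sum_le_count_nonzero_mul_sum_sqr (R : realFieldType) n (x : 'I_n -> R) :
  (\sum_i x i) ^+ 2 <= (\sum_i ((x i != 0)%:R : R)) * \sum_i x i ^+ 2.
Proof.
set S := \sum_i x i; set Q := \sum_i x i ^+ 2; set K := \sum_i _.
have K0 : 0 <= K by apply: sumr_ge0 => i _; rewrite ler0n.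
have [K00|Kne] := eqVneq K 0.
  have x0 i : x i = 0.
    apply/eqP; apply: contraT => xi.
    have : (x i != 0)%:R <= K :> R.
      by rewrite /K (bigD1 i) //= lerDl; apply: sumr_ge0 => j _; exact: ler0n.
    by rewrite K00 xi ler10.
  by rewrite /S big1 // expr0n /= K00 mul0r.
have Kp : 0 < K by rewrite lt_def Kne K0.
pose c := S / K.
have cK : S = c * K by rewrite /c mulfVK.
(* Cauchy-Schwarz against the indicator of the support: expand the squares of
   the deviations from the mean [c] over that support. *)
have dev : \sum_i ((x i != 0)%:R * (x i - c) ^+ 2) = Q - 2 * c * S + c ^+ 2 * K.
  rewrite (eq_bigr (fun i => x i ^+ 2 - 2 * c * x i + c ^+ 2 * (x i != 0)%:R)).
    by rewrite big_split /= sumrB -!mulr_sumr.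
  move=> i _; case: eqVneq => [->|_] /=; first by rewrite mulr0 mul0r; ring.
  by rewrite mul1r mulr1; ring.
have dev0 : 0 <= Q - 2 * c * S + c ^+ 2 * K.
  by rewrite -dev; apply: sumr_ge0 => i _; rewrite mulr_ge0 ?ler0n ?sqr_ge0.
have := mulr_ge0 K0 dev0; rewrite cK; nra.
Qed.

Lemma count_abs_ge_mul_sqr_le_sum_sqr (R : realFieldType) n (x : 'I_n -> R) (eps : R) :
  0 <= eps -> (\sum_i ((eps <= `|x i|)%R%:R : R)) * eps ^+ 2 <= \sum_i x i ^+ 2.
Proof.
move=> e0; rewrite mulr_suml; apply: ler_sum => i _.
case: (leP eps `|x i|) => [ei|_]; last by rewrite mul0r sqr_ge0.
by rewrite mul1r -[x i ^+ 2]real_normK ?num_real // lerXn2r ?nnegrE ?(le_trans e0 ei).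
Qed.

Lemma prodr_indic (R : numDomainType) (T : Type) n (E : 'I_n -> set T) w :
  \prod_(i < n) \1_(E i) w = \1_(\bigcap_i E i) w :> R.
Proof.
have [Ew|Ew] := pselect ((\bigcap_i E i) w).
  by rewrite indicE mem_set // big1 // => i _; rewrite indicE mem_set //; exact: Ew.
have [i Eiw] : exists i, ~ E i w.
  by apply/existsNP => hE; apply: Ew => i _; exact: hE.
by rewrite indicE memNset // (bigD1 i) //= indicE memNset // mul0r.
Qed.
Section Tilt.
Variable R : realType.

(* The tilt of [tiltE], written as a simple function on the partition
   [{0}, {0 < |y| < eps}, {eps <= |y|}] because [iid_law] only states
   independence for indicators. *)
Definition abs_band (eps : R) (k : 'I_3) : set R :=
  if val k == 0%N then [set 0]
  else if val k == 1%N then [set y | 0 < `|y| < eps]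
  else [set y | eps <= `|y|].

Definition band_weight (L : R) (k : 'I_3) : R :=
  if val k == 0%N then 1 else if val k == 1%N then expR 2^-1 else expR (2^-1 - L).

Definition tilt (eps L y : R) : R :=
  \sum_(k < 3) band_weight L k * \1_(abs_band eps k) y.

Lemma band_weight_ge0 L k : 0 <= band_weight L k.
Proof. by rewrite /band_weight; case: ifP => _; [|case: ifP => _]; rewrite ?ler01 ?expR_ge0. Qed.

Lemma measurable_abs_band eps k : measurable (abs_band eps k).
Proof.
rewrite /abs_band; case: ifP => _; first exact: measurable_set1.
case: ifP => _.
  rewrite (_ : [set y | _] = `]-eps, eps[%classic `\` [set 0]).
    by apply: measurableD; [exact: measurable_itv|exact: measurable_set1].
  apply/seteqP; split => y /=; rewrite in_itv /= -ltr_norml.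
    by move=> /andP[y0 ->]; split => // y00; move: y0; rewrite y00 normr0 ltxx.
  by move=> [ye /eqP y0]; rewrite normr_gt0 y0.
rewrite (_ : [set y | _] = ~` `]-eps, eps[%classic).
  by apply: measurableC; exact: measurable_itv.
by apply/seteqP; split => y /=; rewrite in_itv /= -ltr_norml leNgt => /negP.
Qed.

Lemma tiltE eps L y : 0 < eps ->
  tilt eps L y = expR ((y != 0)%:R / 2 - L * (eps <= `|y|)%R%:R).
Proof.
move=> e0; rewrite /tilt !big_ord_recr big_ord0 /= add0r /band_weight /abs_band /=.
rewrite !indicE in_set1.
have [->|y0] := eqVneq y 0.
  rewrite !memNset /= ?normr0 ?ltxx ?(lt_geF e0) //.
  by rewrite !mulr0 !addr0 mulr1 mul0r subr0 expR0.
rewrite mulr0 add0r.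
have [ey|ye] := leP eps `|y|.
  rewrite memNset /=; last by move=> /andP[_]; rewrite ltNge ey.
  by rewrite mem_set //= mulr0 add0r !mulr1 mul1r.
rewrite (memNset (A := [set y1 | eps <= `|y1|])) /=; last by apply/negP; rewrite -ltNge.
by rewrite mem_set /= ?normr_gt0 ?y0 //= mulr1 !mulr0 addr0 subr0 mul1r.
Qed.

Lemma tilt_gt0 eps L y : 0 < eps -> 0 < tilt eps L y.
Proof. by move=> e0; rewrite tiltE // expR_gt0. Qed.

Lemma empirical_density_le_tilt n (x : 'I_n -> R) delta eps L :
  (0 < n)%N -> 0 < eps -> 0 <= L ->
  expR (n%:R * (empirical_pair x).1 ^+ 2 / (2 * (empirical_pair x).2))
    * \1_[set q : R * R | 0 < q.2 <= delta] (empirical_pair x)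
  <= expR (n%:R * (delta * L / eps ^+ 2)) * \prod_i tilt eps L (x i).
Proof.
move=> n0 e0 L0; rewrite /empirical_pair /= indicE.
set S := \sum_i x i; set Q := \sum_i x i ^+ 2.
have tilt_ge0 : 0 <= \prod_i tilt eps L (x i).
  by apply: prodr_ge0 => i _; exact/ltW/tilt_gt0.
have [/andP[Q0 Qd]|Qdelta] := boolP (0 < Q / n%:R <= delta); last first.
  by rewrite memNset /= ?mulr0 ?mulr_ge0 ?expR_ge0 //; exact/negP.
rewrite mem_set /= ?mulr1; last exact/andP.
have nR : 0 < n%:R :> R by rewrite ltr0n.
have {}Q0 : 0 < Q by move: Q0; rewrite pmulr_lgt0 // invr_gt0.
under eq_bigr do rewrite tiltE //.
rewrite -expR_sum -expRD ler_expR big_split /= -mulr_suml sumrN -mulr_sumr.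
set K := \sum_i _; set C := \sum_i _.
have -> : n%:R * (S / n%:R) ^+ 2 / (2 * (Q / n%:R)) = S ^+ 2 / (2 * Q).
  by field; rewrite ?gt_eqF.
have SK : S ^+ 2 / (2 * Q) <= K / 2.
  rewrite ler_pdivrMr ?mulr_gt0 // (_ : K / 2 * (2 * Q) = K * Q); last by field.
  exact: sqr_sum_le_count_nonzero_mul_sum_sqr.
have Cn : C <= n%:R * delta / eps ^+ 2.
  rewrite ler_pdivlMr ?exprn_gt0 //.
  apply: le_trans (count_abs_ge_mul_sqr_le_sum_sqr x (ltW e0)) _.
  by rewrite -ler_pdivrMl // mulrC.
have LC : L * C <= n%:R * (delta * L / eps ^+ 2).
  by rewrite (_ : _ * (_ / _) = L * (n%:R * delta / eps ^+ 2)) ?ler_wpM2l //; ring.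
lra.
Qed.

End Tilt.

Section IidProducts.
Variables (R : realType) (d : measure_display) (T : measurableType d).
Variables (P : probability T R) (n : nat) (X : 'I_n -> T -> R) (rho : probability R R).
Hypothesis iid : iid_law P X rho.
Local Open Scope ereal_scope.

Lemma iid_law_bigcap (B : 'I_n -> set R) : (forall i, measurable (B i)) ->
  P (\bigcap_i (X i @^-1` B i)) = (\prod_i fine (rho (B i)))%:E.
Proof.
case: iid => _ law indep mB; rewrite indep // -prodEFin.
by apply: eq_bigr => i _; rewrite law // fineK // fin_num_measure.
Qed.

Lemma integral_prod_simple_iid m (A : 'I_m -> set R) (u : 'I_m -> R) :
  (forall k, measurable (A k)) -> (forall k, 0 <= u k)%R ->
  \int[P]_w (\prod_(i < n) \sum_(k < m) u k * \1_(A k) (X i w))%:E =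
  (((\sum_(k < m) u k * fine (rho (A k))) ^+ n)%R)%:E.
Proof.
move=> mA u0; have [mX _ _] := iid.
pose E (f : {ffun 'I_n -> 'I_m}) := \bigcap_i (X i @^-1` A (f i)).
have mE f : measurable (E f).
  apply: fin_bigcap_measurable => // i _.
  by rewrite -[X in measurable X]setTI; exact: mX.
(* expand the product of sums over all choices [f] of one band per coordinate *)
have -> : (fun w => (\prod_(i < n) \sum_(k < m) u k * \1_(A k) (X i w))%:E) =
    (fun w => \sum_(f : {ffun 'I_n -> 'I_m}) ((\prod_i u (f i)) * \1_(E f) w)%:E).
  apply: funext => w; rewrite bigA_distr_bigA /= sumEFin; congr (_%:E).
  by apply: eq_bigr => f _; rewrite big_split /= -prodr_indic.
rewrite ge0_integral_sum //; first last.
- by move=> f w _; rewrite lee_fin mulr_ge0 ?prodr_ge0.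
- by move=> f; apply/measurable_EFinP; apply: measurable_funM.
have term (f : {ffun 'I_n -> 'I_m}) : \int[P]_w ((\prod_i u (f i)) * \1_(E f) w)%:E =
    (\prod_i (u (f i) * fine (rho (A (f i)))))%:E.
  under eq_integral do rewrite EFinM.
  rewrite ge0_integralZl_EFin ?prodr_ge0 //; last exact/measurable_EFinP/measurable_indic.
  rewrite integral_indic // setIT.
  by have /= -> := iid_law_bigcap (fun i => mA (f i)); rewrite -EFinM -big_split.
rewrite (eq_bigr _ (fun f _ => term f)) sumEFin.
by rewrite -[in RHS](card_ord n) -prodr_const bigA_distr_bigA.
Qed.

End IidProducts.

Section EmpiricalLaw.
Variable R : realType.

Lemma measurable_Deltastar : measurable (@Deltastar R).
Proof.
apply: measurableD.
  have mD : measurable_fun setT (fun p : R * R => p.1 ^+ 2 <= p.2).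
    apply: measurable_fun_ler; last exact: measurable_snd.
    by apply: measurable_funX; exact: measurable_fst.
  by have := mD measurableT [set true] I; rewrite setTI.
rewrite (_ : [set (0, 0)] = [set (0 : R)] `*` [set (0 : R)]).
  by apply: measurableX; exact: measurable_set1.
by apply/seteqP; split => -[a b] /=; [case=> -> ->|case=> /= -> ->].
Qed.

Lemma measurable_snd_itv (delta : R) : measurable [set q : R * R | 0 < q.2 <= delta].
Proof.
have := @measurable_snd _ _ R R measurableT _ (measurable_itv `]0, delta]).
by rewrite setTI; congr measurable; apply/seteqP; split => p /=; rewrite in_itv.
Qed.

Lemma measurable_empirical_density (n : nat) (delta : R) :
  measurable_fun setT (fun p : R * R =>
    (expR (n%:R * p.1 ^+ 2 / (2 * p.2)) * \1_[set q : R * R | 0 < q.2 <= delta] p)%:E).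
Proof.
apply/measurable_EFinP.
(* [1 / (2 y) = expR (- ln (2 y))] wherever the indicator does not vanish *)
rewrite (_ : (fun p : R * R => _) = (fun p : R * R => expR (n%:R * p.1 ^+ 2 *
    expR (- ln (2 * p.2))) * \1_[set q : R * R | 0 < q.2 <= delta] p)).
  apply: measurable_funM; last exact: measurable_indic (measurable_snd_itv delta).
  apply: measurableT_comp; first exact: measurable_expR.
  apply: measurable_funM.
    apply: measurable_funM; first exact: measurable_cst.
    by apply: measurable_funX; exact: measurable_fst.
  apply: measurableT_comp; first exact: measurable_expR.
  apply: measurable_funN; apply: measurableT_comp; first exact: measurable_ln.
  by apply: measurable_funM; [exact: measurable_cst|exact: measurable_snd].
apply: funext => p; rewrite indicE.
have [pdelta|pdelta] := boolP (0 < p.2 <= delta); last first.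
  by rewrite memNset ?mulr0 //; exact/negP.
have p0 : 0 < 2 * p.2 by case/andP: pdelta => p0 _; rewrite mulr_gt0.
by rewrite mem_set // expRN lnK.
Qed.

Lemma measurable_empirical_pair d (T : measurableType d) n (X : 'I_n -> T -> R) :
  (forall i, measurable_fun setT (X i)) ->
  measurable_fun setT (fun w => empirical_pair (fun i => X i w)).
Proof.
move=> mX; apply: measurable_fun_pair.
  apply: measurable_funM; last exact: measurable_cst.
  by apply: measurable_sum => i; exact: mX.
apply: measurable_funM; last exact: measurable_cst.
by apply: measurable_sum => i; apply: measurable_funX; exact: mX.
Qed.

Definition tilt_mean (rho : probability R R) (eps L : R) : R :=
  \sum_(k < 3) band_weight L k * fine (rho (abs_band eps k)).

Lemma integral_empirical_density_le d (T : measurableType d) (P : probability T R) n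
    (X : 'I_n -> T -> R) (rho : probability R R) (delta eps L : R) :
  iid_law P X rho -> (0 < n)%N -> 0 < eps -> 0 <= L ->
  (\int[nu_tilde P X]_(p in @Deltastar R)
      (expR (n%:R * p.1 ^+ 2 / (2 * p.2)) * \1_[set q : R * R | 0 < q.2 <= delta] p)%:E
   <= (expR (n%:R * (delta * L / eps ^+ 2)) * tilt_mean rho eps L ^+ n)%:E)%E.
Proof.
move=> iid n0 e0 L0; have [mX _ _] := iid.
set pair := fun w => empirical_pair (fun i => X i w).
have mpair : measurable_fun setT pair := measurable_empirical_pair mX.
have mpairD : measurable (pair @^-1` @Deltastar R).
  by rewrite -[X in measurable X]setTI; exact: mpair measurableT _ measurable_Deltastar.
have mtilt : measurable_fun setT (fun w => (\prod_i tilt eps L (X i w))%:E).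
  apply/measurable_EFinP; apply: measurable_prod => i _.
  apply: measurable_sum => k; apply: measurable_funM; first exact: measurable_cst.
  exact: measurableT_comp (measurable_indic (measurable_abs_band _ _)) (mX i).
have tilt_ge0 w : (0 <= (\prod_i tilt eps L (X i w))%:E)%E.
  by rewrite lee_fin prodr_ge0 // => i _; exact/ltW/tilt_gt0.
rewrite /nu_tilde (ge0_integral_pushforward mpair) //; first last.
- exact: measurable_funTS (measurable_empirical_density n delta).
- exact: measurable_Deltastar.
apply: (@le_trans _ _ (\int[P]_(w in pair @^-1` @Deltastar R)
    ((expR (n%:R * (delta * L / eps ^+ 2)))%:E * (\prod_i tilt eps L (X i w))%:E))%E).
  apply: ge0_le_integral => //.
  - by move=> w _; rewrite lee_fin mulr_ge0 ?expR_ge0.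
  - exact/measurable_funTS/(measurableT_comp (measurable_empirical_density _ _) mpair).
  - exact/measurable_funeM/measurable_funTS.
  - by move=> w _; rewrite -EFinM lee_fin; exact: empirical_density_le_tilt.
rewrite ge0_integralZl_EFin ?expR_ge0 //; last exact: measurable_funTS.
rewrite EFinM lee_pmul2l ?lte_fin ?expR_gt0 //.
apply: le_trans (ge0_subset_integral P mpairD measurableT mtilt (fun w _ => tilt_ge0 w)
  (@subsetT _ _)) _.
by rewrite (integral_prod_simple_iid iid) //; [exact: measurable_abs_band|exact: band_weight_ge0].
Qed.

End EmpiricalLaw.

Section TiltMean.
Variables (R : realType) (rho : probability R R).

Lemma variance_gt0_prob_set1_lt1 : (0 < 'V_rho[idfun])%E -> fine (rho [set 0]) < 1.
Proof.
move=> V0; rewrite ltNge; apply/negP => rho0_ge1.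
have rho0 : rho [set 0] = 1%E.
  apply/eqP; rewrite eq_le probability_le1 ?measurable_set1 //=.
  by rewrite -(fineK (fin_num_measure _ _ (measurable_set1 0))) lee_fin.
have rhoC0 : rho (~` [set 0]) = 0%E.
  by rewrite probability_setC ?measurable_set1 // rho0 subee.
(* [rho] is concentrated at [0] *)
have expectation0 (g : R -> R) : measurable_fun setT g -> g 0 = 0 -> ('E_rho[g] = 0)%E.
  move=> mg g0; rewrite unlock (@ae_eq_integral _ _ _ rho setT (cst 0%E)) //.
  - by rewrite integral0.
  - exact/measurable_EFinP.
  - exists (~` [set 0]); split => //; first exact: measurableC (measurable_set1 _).
    by move=> x /= gx x0; apply: gx => _; rewrite x0 g0.
move: V0; rewrite /variance unlock [X in fine X]expectation0 //; last exact: measurable_id.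
have -> : ((idfun \- cst 0) * (idfun \- cst 0))%R = (fun x : R => x * x).
  by apply/funext => x; rewrite !fctE /= subr0.
by rewrite expectation0 ?lt_irreflexive ?mulr0 //; exact: measurable_funM.
Qed.

Lemma prob_abs_band_small (eta : R) : 0 < eta ->
  exists2 eps : R, 0 < eps & fine (rho [set y | 0 < `|y| < eps]) < eta.
Proof.
move=> eta0.
pose F (k : nat) := [set y : R | 0 < `|y| < k.+1%:R^-1].
have mF k : measurable (F k) by exact: (measurable_abs_band _ (@Ordinal 3 1 erefl)).
have F_nonincr : nonincreasing_seq F.
  move=> m k mk; apply/asboolP => y; rewrite /F /= => /andP[y0 ym].
  by rewrite y0 (lt_le_trans ym) // lef_pV2 ?posrE ?ltr0n // ler_nat ltnS.
have F0 : \bigcap_k F k = set0.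
  apply/seteqP; split => // y Fy.
  have /andP[y0 yl] := Fy (Num.truncn (`|y|^-1)) I.
  have := Num.Theory.truncnS_gt (`|y|^-1).
  rewrite -(invrK (_.+1%:R)) ltf_pV2 ?posrE ?invr_gt0 ?ltr0n //.
  by move=> /(lt_trans yl); rewrite ltxx.
have F0_fin : (rho (F 0%N) < +oo)%E.
  by rewrite -(fineK (fin_num_measure _ _ (mF 0%N))) ltry.
have := nonincreasing_cvg_mu F0_fin mF (bigcapT_measurable mF) F_nonincr.
rewrite F0 measure0 => /fine_cvg /(cvgr_lt 0) /(_ eta eta0) [N _ hN].
by exists N.+1%:R^-1; [rewrite invr_gt0 ltr0n|exact: (hN N (leqnn N))].
Qed.

Lemma tilt_mean_ge0 eps L : 0 <= tilt_mean rho eps L.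
Proof.
by apply: sumr_ge0 => k _; rewrite mulr_ge0 ?band_weight_ge0 // fine_ge0 ?measure_ge0.
Qed.

(* [a = (1 - p0) / 4] bounds both the contribution of the middle band and the
   weight [expR (1/2 - L)] of the outer one, so the mean is at most [p0 + 2 a]. *)
Lemma tilt_mean_le : fine (rho [set 0]) < 1 ->
  exists eps L, [/\ 0 < eps, 0 < L & tilt_mean rho eps L <= (1 + fine (rho [set 0])) / 2].
Proof.
set p0 := fine (rho [set 0]) => p01.
have p00 : 0 <= p0 by rewrite fine_ge0 ?measure_ge0.
pose a := (1 - p0) / 4.
have a0 : 0 < a by rewrite divr_gt0 // subr_gt0.
have a1 : a < 1 by rewrite ltr_pdivrMr //; lra.
have [eps e0 small] := prob_abs_band_small (divr_gt0 a0 (expR_gt0 2^-1)).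
pose L := 2^-1 - ln a.
have L0 : 0 < L by rewrite /L subr_gt0 (lt_trans (ln_lt0 _)) ?a0 ?a1 ?invr_gt0.
exists eps, L; split => //.
rewrite /tilt_mean !big_ord_recr big_ord0 /= add0r /band_weight /= -/p0 mul1r.
have -> : expR (2^-1 - L) = a by rewrite /L opprB addrC subrK lnK // posrE.
have middle : expR 2^-1 * fine (rho [set y | 0 < `|y| < eps]) <= a.
  by rewrite mulrC -ler_pdivlMr ?expR_gt0 //; exact: ltW.
have large : a * fine (rho [set y | eps <= `|y|]) <= a.
  have mlarge : measurable [set y : R | eps <= `|y|] := measurable_abs_band eps ord_max.
  by rewrite ler_piMr ?(ltW a0) // -lee_fin fineK ?fin_num_measure ?probability_le1.
move: middle large; rewrite /a; lra.
Qed.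

Lemma exists_contracting_tilt : (0 < 'V_rho[idfun])%E ->
  exists eps L gamma,
    [/\ 0 < eps, 0 < L, 0 < gamma & tilt_mean rho eps L <= expR (- (2 * gamma))].
Proof.
move=> /variance_gt0_prob_set1_lt1 p01; have [eps [L [e0 L0 mean_le]]] := tilt_mean_le p01.
have p00 : 0 <= fine (rho [set 0]) by rewrite fine_ge0 ?measure_ge0.
set c := (1 + fine (rho [set 0])) / 2 in mean_le.
have c0 : 0 < c by rewrite /c; lra.
have c1 : c < 1 by rewrite /c; lra.
exists eps, L, (- ln c / 2); split => //; first by rewrite divr_gt0 // oppr_gt0 ln_lt0 ?c0.
by rewrite mulrC divfK ?pnatr_eq0 // opprK lnK // posrE.
Qed.

End TiltMean.

Lemma ereal_gt0_exists_lt (R : realType) (x : \bar R) :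
  (0 < x)%E -> exists2 s : R, 0 < s & (s%:E < x)%E.
Proof.
case: x => [v| |] //; last by exists 1; rewrite ?ltry.
rewrite lte_fin => v0; exists (v / 2); first by rewrite divr_gt0.
by rewrite lte_fin ltr_pdivrMr // ltr_pMr // ltr1n.
Qed.

Lemma expR_mul_expn_le (R : realType) (n : nat) (a b gamma : R) :
  0 <= b -> b <= expR (- (2 * gamma)) -> a <= gamma ->
  expR (n%:R * a) * b ^+ n <= expR (- (n%:R * gamma)).
Proof.
move=> b0 bg ag.
have an : expR (n%:R * a) <= expR (n%:R * gamma) by rewrite ler_expR ler_wpM2l.
have bn : b ^+ n <= expR (- (2 * gamma)) ^+ n by rewrite lerXn2r // nnegrE expR_ge0.
apply: le_trans (ler_pM (expR_ge0 _) (exprn_ge0 _ b0) an bn) _.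
by rewrite -expRM_natl -expRD ler_expR; lra.
Qed.

Theorem proposition4 (R : realType) (rho : probability R R) :
  symmetric_prob rho ->
  (0 < 'V_rho[idfun])%E ->
  (\forall uv \near ((0 : R), (0 : R)), Lambda_finite rho uv.1 uv.2) ->
  exists gamma : R, exists delta0 : R,
    [/\ 0 < gamma, 0 < delta0, (delta0%:E < 'V_rho[idfun])%E &
    forall delta : R, 0 < delta <= delta0 ->
      exists N : nat, (1 <= N)%N /\
      forall n : nat, (N <= n)%N ->
      forall (d : measure_display) (T : measurableType d) (P : probability T R)
             (X : 'I_n -> T -> R),
        iid_law P X rho ->
        (\int[nu_tilde P X]_(p in @Deltastar R)
            (expR (n%:R * p.1 ^+ 2 / (2 * p.2))
              * \1_[set q : R * R | 0 < q.2 <= delta] p)%:E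
          <= (expR (- (n%:R * gamma)))%:E)%E].
Proof.
move=> _ V0 _.
have [s s0 sV] := ereal_gt0_exists_lt V0.
have [eps [L [gamma [e0 L0 g0 mean_le]]]] := exists_contracting_tilt V0.
exists gamma, (Num.min (gamma * eps ^+ 2 / L) s); split => //.
- by rewrite lt_min s0 andbT divr_gt0 // mulr_gt0 // exprn_gt0.
- by apply: le_lt_trans sV; rewrite lee_fin ge_min lexx orbT.
move=> delta /andP[d0]; rewrite le_min => /andP[dL _].
exists 1%N; split => // n n1 d T P X iid.
apply: le_trans (integral_empirical_density_le delta iid n1 e0 (ltW L0)) _.
rewrite lee_fin expR_mul_expn_le ?tilt_mean_ge0 //.
by rewrite ler_pdivrMr ?exprn_gt0 // -ler_pdivlMr.
Qed.
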